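(* Let $s \geq 0$ be an integer and let $G$ be a bipartite graph with bipartition $A\cup B$, where $A=\{a_1,\dots, a_n\}$ and $B=\{b_1,\dots,b_n\}$, such that: (P1) for all $i,j\in \{1,\dots,n\}$ with $i<j$, $|N_G(a_i)\cap \{b_{i+1},\dots, b_{j}\}| \geq \frac{j-i-s}{2}$; (P2) for all $i,j\in \{1,\dots,n\}$ with $i<j$, $|N_G(b_j)\cap \{a_{i},\dots, a_{j-1}\}| \geq \frac{j-i-s}{2}$. Then $G$ contains a matching of size at least $n-s-1$.
   Context: $N_G(x)$ denotes the set of neighbours of $x$ in the (undirected) graph $G$. *)

From mathcomp Require Import all_boot.
Set Implicit Arguments. Unset Strict Implicit. Unset Printing Implicit Defensive.

(* A bipartite graph with parts A = {a_0,...,a_(n-1)} and B = {b_0,...,b_(n-1)}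
   (0-based indexing of the paper's a_1..a_n, b_1..b_n) is given by its
   biadjacency relation  adj i j  <=>  a_i b_j is an edge. *)

Definition nbA n (adj : 'I_n -> 'I_n -> bool) (i j : 'I_n) : nat :=
  #|[set k : 'I_n | [&& i < k, k <= j & adj i k]]|.

Definition nbB n (adj : 'I_n -> 'I_n -> bool) (i j : 'I_n) : nat :=
  #|[set k : 'I_n | [&& i <= k, k < j & adj k j]]|.

Definition is_matching n (adj : 'I_n -> 'I_n -> bool) (M : {set 'I_n * 'I_n}) : Prop :=
  (forall e, e \in M -> adj e.1 e.2) /\
  (forall e f, e \in M -> f \in M -> (e.1 = f.1 \/ e.2 = f.2) -> e = f).

(* Deficient Hall: if |X| <= |N(X)| + d for every set X of left vertices, there is a
   matching missing at most d left vertices.  Induct on the number of edges: a left vertex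
   with two edges ab1, ab2 keeps the condition after deleting one of them, since if both
   deletions failed, on X1 and X2 say, submodularity of |N| applied to X1 \ a and
   X2 \ a would break the condition for the original graph.  Once every left vertex has
   at most one edge, keeping one edge at each right vertex gives the matching.

   For the theorem we take d = s + 1.  If X ⊆ A and Y ⊆ B span no edge and D = X ∩ Y (as
   index sets) has at least two elements, let i < j be its extreme indices.  Then
   N(a_i) ∩ (i, j] avoids Y and N(b_j) ∩ [i, j) avoids X, so (P1) and (P2) bound
   |[i, j] \ Y| + |[i, j] \ X| from below, while it is at most
   (j - i + 1) - |D| + (n - |X ∪ Y|).  This gives |X| + |Y| <= n + s + 1, which for
   Y = B \ N(X) is the deficient Hall condition. *)
From mathcomp Require Import all_boot zify.
Set Implicit Arguments. Unset Strict Implicit. Unset Printing Implicit Defensive.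

Section DeficientHall.
Variables (T1 T2 : finType) (d : nat).
Implicit Types (adj : T1 -> T2 -> bool) (X Y : {set T1}).

Definition neighbourhood adj X : {set T2} := [set b | [exists a in X, adj a b]].
Definition edges adj : {set T1 * T2} := [set e | adj e.1 e.2].
Definition deficient_hall adj := forall X, #|X| <= #|neighbourhood adj X| + d.
Definition bimatching adj (M : {set T1 * T2}) :=
  (forall e, e \in M -> adj e.1 e.2) /\
  (forall e f, e \in M -> f \in M -> (e.1 = f.1 \/ e.2 = f.2) -> e = f).

Definition del_edge adj a b := fun x y => adj x y && ((x, y) != (a, b)).

Lemma neighbourhoodS adj X Y : X \subset Y -> neighbourhood adj X \subset neighbourhood adj Y.
Proof.
move=> /subsetP sXY; apply/subsetP => b; rewrite !inE => /exists_inP[a aX hab].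
by apply/exists_inP; exists a => //; apply: sXY.
Qed.

Lemma neighbourhoodU adj X Y :
  neighbourhood adj (X :|: Y) = neighbourhood adj X :|: neighbourhood adj Y.
Proof.
apply/setP => b; rewrite !inE; apply/exists_inP/orP.
- by case=> a; rewrite inE => /orP[aX|aY] hab; [left|right]; apply/exists_inP; exists a.
- by case=> /exists_inP[a aZ hab]; exists a; rewrite // inE aZ ?orbT.
Qed.

Lemma neighbourhood_del_edge_setD1 adj a b X :
  neighbourhood adj (X :\ a) \subset neighbourhood (del_edge adj a b) X.
Proof.
apply/subsetP => y; rewrite !inE => /exists_inP[x]; rewrite !inE => /andP[xa xX] hxy.
by apply/exists_inP; exists x; rewrite // /del_edge hxy xpair_eqE (negbTE xa).
Qed.

Lemma neighbourhood_del_edge_at adj a b b' X :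
  a \in X -> b' != b -> adj a b' -> b' \in neighbourhood (del_edge adj a b) X.
Proof.
move=> aX bb' hab'; rewrite inE; apply/exists_inP; exists a => //.
by rewrite /del_edge hab' xpair_eqE (negbTE bb') andbF.
Qed.

Lemma card_edges_del_edge adj a b :
  adj a b -> #|edges (del_edge adj a b)| < #|edges adj|.
Proof.
move=> hab; have -> : edges (del_edge adj a b) = edges adj :\ (a, b).
  by apply/setP => -[x y]; rewrite !inE /del_edge andbC.
by rewrite [X in _ < X](cardsD1 (a, b)) inE hab.
Qed.

Lemma bimatching_del_edge adj a b M : bimatching (del_edge adj a b) M -> bimatching adj M.
Proof. by case=> edgeM disjM; split=> // e /edgeM /andP[]. Qed.

Lemma deficient_hall_or_deficient_set adj :
  deficient_hall adj \/ exists X, #|neighbourhood adj X| + d < #|X|.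
Proof.
have [/forallP hall|] := boolP [forall X : {set T1}, #|X| <= #|neighbourhood adj X| + d].
  by left.
by rewrite negb_forall => /existsP[X defX]; right; exists X; rewrite ltnNge.
Qed.

Lemma deficient_set_del_edge adj a b X : deficient_hall adj ->
  #|neighbourhood (del_edge adj a b) X| + d < #|X| -> a \in X.
Proof.
move=> hall defX; apply/negPn/negP => aX.
have := subset_leq_card (neighbourhood_del_edge_setD1 adj a b X).
rewrite (setDidPl _); last by rewrite disjoint_sym disjoints1.
by move: (hall X); lia.
Qed.

Lemma deficient_hall_del_edge adj a b1 b2 : b1 != b2 -> deficient_hall adj ->
  deficient_hall (del_edge adj a b1) \/ deficient_hall (del_edge adj a b2).
Proof.
move=> b12 hall.
have [|[X1 defX1]] := deficient_hall_or_deficient_set (del_edge adj a b1); first by left.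
have [|[X2 defX2]] := deficient_hall_or_deficient_set (del_edge adj a b2); first by right.
exfalso.
have aX1 := deficient_set_del_edge hall defX1.
have aX2 := deficient_set_del_edge hall defX2.
set N1 := neighbourhood (del_edge adj a b1) X1 in defX1.
set N2 := neighbourhood (del_edge adj a b2) X2 in defX2.
set P := X1 :\ a; set Q := X2 :\ a.
have NP : neighbourhood adj P \subset N1 := neighbourhood_del_edge_setD1 adj a b1 X1.
have NQ : neighbourhood adj Q \subset N2 := neighbourhood_del_edge_setD1 adj a b2 X2.
have NaPQ : neighbourhood adj (a |: (P :|: Q)) \subset N1 :|: N2.
  rewrite !neighbourhoodU subUset setUSS // andbT; apply/subsetP => b.
  rewrite inE => /exists_inP[x /set1P-> hab]; rewrite inE.
  case: (eqVneq b b1) => bb1; last by rewrite neighbourhood_del_edge_at.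
  by rewrite orbC neighbourhood_del_edge_at // bb1.
have NPQ : neighbourhood adj (P :&: Q) \subset N1 :&: N2.
  rewrite subsetI (subset_trans (neighbourhoodS adj (subsetIl P Q)) NP).
  by rewrite (subset_trans (neighbourhoodS adj (subsetIr P Q)) NQ).
have := subset_leq_card NaPQ; have := subset_leq_card NPQ.
have := hall (a |: (P :|: Q)); have := hall (P :&: Q).
rewrite cardsU1 !inE eqxx /=.
have := cardsUI P Q; have := cardsUI N1 N2.
have := cardsD1 a X1; have := cardsD1 a X2; rewrite aX1 aX2 -/P -/Q.
lia.
Qed.

Lemma bimatching_of_functional adj : deficient_hall adj ->
  (forall a b1 b2, adj a b1 -> adj a b2 -> b1 = b2) ->
  exists M, bimatching adj M /\ #|T1| <= #|M| + d.
Proof.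
move=> hall functional.
exists [set e | adj e.1 e.2 & [pick x | adj x e.2] == Some e.1]; split; first split.
- by move=> e; rewrite inE => /andP[].
- move=> [a1 b1] [a2 b2]; rewrite !inE /= => /andP[h1 /eqP p1] /andP[h2 /eqP p2] [a12|b12].
  + by move: h1; rewrite a12 => /functional /(_ h2) ->.
  + by move: p1; rewrite b12 p2 => -[->].
- rewrite -cardsT; apply: leq_trans (hall setT) _; rewrite leq_add2r.
  apply: leq_trans (leq_imset_card snd _); apply: subset_leq_card.
  apply/subsetP => b; rewrite inE => /exists_inP[a _ hab].
  case pick_b: [pick x | adj x b] => [x|]; last first.
    by move: pick_b; case: pickP => // /(_ a); rewrite hab.
  have hxb : adj x b by move: pick_b; case: pickP => // y hyb [<-].
  by apply/imsetP; exists (x, b); rewrite // inE /= hxb pick_b /=.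
Qed.

Theorem deficient_hall_bimatching adj : deficient_hall adj ->
  exists M, bimatching adj M /\ #|T1| <= #|M| + d.
Proof.
have [m] := ubnP #|edges adj|; elim: m adj => // m IH adj /ltnSE-sz_adj hall.
have [/forallP functional|] :=
  boolP [forall a, forall b1, forall b2, [==> adj a b1, adj a b2 => b1 == b2]].
  apply: bimatching_of_functional => // a b1 b2 hab1 hab2.
  apply/eqP; move/forallP: (functional a) => /(_ b1) /forallP /(_ b2).
  by rewrite hab1 hab2.
rewrite negb_forall => /existsP[a]; rewrite negb_forall => /existsP[b1].
rewrite negb_forall => /existsP[b2]; rewrite !negb_imply => /and3P[hab1 hab2 b12].
have del_IH b : adj a b -> deficient_hall (del_edge adj a b) ->
    exists M, bimatching adj M /\ #|T1| <= #|M| + d.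
  move=> hab /(IH _ (leq_trans (card_edges_del_edge hab) sz_adj))[M [matchM szM]].
  by exists M; split=> //; apply: bimatching_del_edge matchM.
by case: (deficient_hall_del_edge a b12 hall) => /del_IH; apply.
Qed.

End DeficientHall.

Lemma card_setD_add_le (T : finType) (I X Y : {set T}) : X :&: Y \subset I ->
  #|I :\: Y| + #|I :\: X| + #|X :&: Y| <= #|I| + #|~: (X :|: Y)|.
Proof.
move=> sDI; have := cardsUI (I :\: Y) (I :\: X).
have := cardsID (X :&: Y) I; rewrite (setIidPr sDI) setDIr setUC.
suff : #|(I :\: Y) :&: (I :\: X)| <= #|~: (X :|: Y)| by lia.
apply/subset_leq_card/subsetP => k; rewrite !inE.
by case/andP=> /andP[kY _] /andP[kX _]; rewrite (negbTE kX).
Qed.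

Lemma card_ord_interval n (i j : 'I_n) : #|[set k : 'I_n | i <= k <= j]| <= (j - i).+1.
Proof.
rewrite cardE -(size_map val) -(size_iota i (j - i).+1) uniq_leq_size //.
  by rewrite map_inj_uniq ?enum_uniq //; apply: val_inj.
move=> m /mapP[k]; rewrite mem_enum inE => /andP[ik kj] ->.
by rewrite mem_iota ik /=; lia.
Qed.

Lemma ord_set_extremes n (D : {set 'I_n}) : 1 < #|D| ->
  exists i j, [/\ i \in D, j \in D, i < j & D \subset [set k : 'I_n | i <= k <= j]].
Proof.
move=> D2; have [k0 k0D] : exists k0, k0 \in D by apply/set0Pn; rewrite -card_gt0 ltnW.
have [i iD imin] := arg_minnP (@nat_of_ord n) k0D.
have [j jD jmax] := arg_maxnP (@nat_of_ord n) k0D.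
have sDI : D \subset [set k : 'I_n | i <= k <= j].
  by apply/subsetP => k kD; rewrite inE; apply/andP; split; [exact: imin|exact: jmax].
exists i, j; split=> //; rewrite ltnNge; apply/negP => ji.
suff : D \subset [set i] by move/subset_leq_card; rewrite cards1 leqNgt D2.
apply/subsetP => k kD; rewrite inE; apply/eqP/val_inj/eqP.
by rewrite eqn_leq imin // (leq_trans (jmax _ kD) ji).
Qed.

Section Claim.
Variables (s n : nat) (adj : 'I_n -> 'I_n -> bool).
Hypothesis nbA_ge : forall i j : 'I_n, i < j -> j - i <= 2 * nbA adj i j + s.
Hypothesis nbB_ge : forall i j : 'I_n, i < j -> j - i <= 2 * nbB adj i j + s.

Lemma card_nonadjacent_le (X Y : {set 'I_n}) :
  (forall x y, x \in X -> y \in Y -> ~~ adj x y) -> #|X| + #|Y| <= n + s + 1.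
Proof.
move=> nonadj; have := cardsUI X Y; have := cardsC (X :|: Y); rewrite card_ord.
suff : #|X :&: Y| <= #|~: (X :|: Y)| + s + 1 by lia.
have [D1|/ord_set_extremes[i [j [iD jD ij sDI]]]] := leqP #|X :&: Y| 1; first lia.
set I := [set k : 'I_n | i <= k <= j] in sDI.
have iX : i \in X by move: iD; rewrite inE => /andP[].
have jY : j \in Y by move: jD; rewrite inE => /andP[].
have nbAi : nbA adj i j <= #|I :\: Y|.
  apply/subset_leq_card/subsetP => k; rewrite !inE => /and3P[ik kj hik].
  rewrite (ltnW ik) kj !andbT; apply: contraL hik; exact: nonadj.
have nbBj : nbB adj i j <= #|I :\: X|.
  apply/subset_leq_card/subsetP => k; rewrite !inE => /and3P[ik kj hkj].
  rewrite ik (ltnW kj) !andbT; apply: contraL hkj => kX; exact: nonadj.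
have := @card_setD_add_le _ I X Y sDI; have := card_ord_interval i j; rewrite -/I.
have := nbA_ge ij; have := nbB_ge ij.
(* [{set 'I_n}] elaborates in two convertible but syntactically different ways here;
   naming the cardinals makes [lia] see them as the same atoms. *)
set D := #|X :&: Y|; set C := #|~: (X :|: Y)|.
lia.
Qed.

Lemma deficient_hall_claim : deficient_hall s.+1 adj.
Proof.
move=> X; have nonadj x y : x \in X -> y \in ~: neighbourhood adj X -> ~~ adj x y.
  by move=> xX; rewrite !inE; apply: contra => hxy; apply/exists_inP; exists x.
have := card_nonadjacent_le nonadj; have := cardsC (neighbourhood adj X).
rewrite card_ord; move: #|X| #|neighbourhood adj X| #|~: neighbourhood adj X| => ? ? ?; lia.
Qed.

End Claim.

Theorem claim3p2 (s n : nat) (adj : 'I_n -> 'I_n -> bool) :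
  (forall i j : 'I_n, i < j -> j - i <= 2 * nbA adj i j + s) ->
  (forall i j : 'I_n, i < j -> j - i <= 2 * nbB adj i j + s) ->
  exists M : {set 'I_n * 'I_n}, is_matching adj M /\ n - s - 1 <= #|M|.
Proof.
move=> nbA_ge nbB_ge.
have [M [matchM szM]] := deficient_hall_bimatching (deficient_hall_claim nbA_ge nbB_ge).
by exists M; split=> //; move: szM; rewrite card_ord; move: #|M| => m; lia.
Qed.
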